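(* Let $0<\delta<1$, $0<\varepsilon<1/7$, $2<\alpha<\min(\frac{2}{1-\delta},3)$ and $0<\rho<\min\!\left(\frac{1-\delta}{2},\frac{2-\alpha(1-\delta)}{4}\right)$. Then for all sufficiently large $n$ the following holds. Let $G\sim G(n,p)$ with $p=n^{\delta-1}$, and let $H$ be a balanced graph on $m=n^{\rho}$ vertices with average degree $\alpha$. Then $\mathbb E[X_H(G)]\to+\infty$ as $n\to\infty$, and for every $\beta\in[0,1)$, \[\Pr\big[X_H(G)\le\beta\,\mathbb E[X_H(G)]\big]\le\frac{4\varepsilon}{(1-\beta)^2}.\]
   Context: A graph with average degree $\alpha$ is balanced if every induced subgraph has average degree at most $\alpha$. $G(n,p)$ is the Erdős–Rényi random graph on $[n]$. With $H$ on vertex set $[m]$ ($m$ assumed to divide $n$), partition $[n]$ into parts $P_i=\{(i-1)\frac nm+1,\dots,i\frac nm\}$. $X_H(G)$ is the number of sets $S=\{v_1,\dots,v_m\}$ with $v_i\in P_i$ such that $i\mapsto v_i$ is an isomorphism from $H$ onto the induced subgraph $G[S]$. *)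

From HB Require Import structures.
From mathcomp Require Import all_boot all_order all_algebra.
From mathcomp Require Import reals exp.
Set Implicit Arguments. Unset Strict Implicit. Unset Printing Implicit Defensive.
Import Order.TTheory GRing.Theory Num.Theory.
Local Open Scope ring_scope.

Definition simple_graph (T : finType) (e : rel T) : Prop :=
  (forall x, e x x = false) /\ (forall x y, e x y = e y x).

Definition n_edges_in (T : finType) (e : rel T) (S : {set T}) : nat :=
  #|[set x : T * T | [&& x.1 \in S, x.2 \in S, (enum_rank x.1 < enum_rank x.2)%N
                        & e x.1 x.2]]|.

Definition avg_deg_in {R : realType} (T : finType) (e : rel T) (S : {set T}) : R :=
  (2 * n_edges_in e S)%:R / #|S|%:R.

Definition has_avg_deg {R : realType} (T : finType) (e : rel T) (alpha : R) : Prop :=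
  avg_deg_in (R:=R) e [set: T] = alpha.

Definition balanced {R : realType} (T : finType) (e : rel T) (alpha : R) : Prop :=
  has_avg_deg e alpha /\
  forall S : {set T}, S != set0 -> avg_deg_in e S <= alpha.

(* A graph on 'I_n is encoded by its edge set: a set of pairs (u,v) with u < v. *)
Definition gedges (n : nat) := {set 'I_n * 'I_n}.

Definition is_simple_edges n (E : gedges n) : bool :=
  [forall x in E, (x.1 < x.2)%N].

Definition gadj n (E : gedges n) (u v : 'I_n) : bool :=
  ((u, v) \in E) || ((v, u) \in E).

Definition gnp_prob {R : realType} (n : nat) (p : R) (E : gedges n) : R :=
  if is_simple_edges E then p ^+ #|E| * (1 - p) ^+ ('C(n, 2) - #|E|) else 0.

Definition gnp_E {R : realType} n (p : R) (X : gedges n -> R) : R :=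
  \sum_(E : gedges n) gnp_prob p E * X E.

Definition gnp_Pr {R : realType} n (p : R) (A : pred (gedges n)) : R :=
  \sum_(E : gedges n | A E) gnp_prob p E.

(* part i = P_{i+1} = { i*(n/m), ..., (i+1)*(n/m) - 1 }  (0-indexed vertices) *)
Definition part (n m : nat) (i : 'I_m) : {set 'I_n} :=
  [set v : 'I_n | (i * (n %/ m) <= v)%N && (v < i.+1 * (n %/ m))%N].

Definition X_H (n m : nat) (e : rel 'I_m) (E : gedges n) : nat :=
  #|[set S : {set 'I_n} |
     [exists f : {ffun 'I_m -> 'I_n},
        [&& [forall i, f i \in @part n m i],
            S == f @: [set: 'I_m],
            injectiveb f
          & [forall i, forall j, e i j == gadj E (f i) (f j)]]]]|.

(* Second-moment method.  X_H counts the maps f with f i in the i-th part that embed H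
   as an induced subgraph, so E[X_H] = (n/m)^m P_H, where P_H = p^e(H) (1-p)^(C(m,2)-e(H))
   is the probability that m fixed vertices span a copy of H.  If f and g agree on the set
   K of indices, their images share at most e(H[K]) <= alpha |K| / 2 edges (balancedness)
   and at most m^2 pairs, all other pairs being independent; summing over f and g gives
     E[X_H^2] <= P_H^2 (1-p)^(-m^2) ((n/m)^2 + (n/m)(t - 1))^m   with t = p^(-alpha/2).
   Chebyshev's inequality then bounds Pr[X_H <= beta E[X_H]] by
     ((1-p)^(-m^2) (1 + (t-1)/(n/m))^m - 1) / (1-beta)^2.
   For p = n^(delta-1) and m = n^rho both m^2 p and m t / (n/m) are negative powers of n, so
   the numerator is at most e^(2 eps) - 1 <= 4 eps for large n, while
   E[X_H] >= (n/m p^(alpha/2))^m / 2 is a positive power of n. *)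

From HB Require Import structures.
From mathcomp Require Import all_boot all_order all_algebra.
From mathcomp Require Import reals exp.
From mathcomp Require Import ring lra sequences.
Import Order.TTheory GRing.Theory Num.Theory.
Local Open Scope ring_scope.
Set Implicit Arguments. Unset Strict Implicit.

Definition ltn_pairs n := [set x : 'I_n * 'I_n | (x.1 < x.2)%N].

Lemma card_ltn_pairs n : #|ltn_pairs n| = 'C(n, 2).
Proof.
rewrite -sum1_card big_mkcond /= -bin2_sum big_mkord.
rewrite (eq_bigr (fun x : 'I_n * 'I_n => (x.1 < x.2 : nat))); last first.
  by move=> x _; rewrite inE; case: ifP.
rewrite -(pair_big xpredT xpredT (fun u v : 'I_n => (u < v : nat))) exchange_big /=.
apply: eq_bigr => v _.
rewrite -(big_mkord xpredT (fun u => (u < v : nat))).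
rewrite (big_cat_nat (leq0n v) (ltnW (ltn_ord v))) /=.
rewrite (@eq_big_nat _ _ _ 0 v _ (fun=> 1%N)); last by move=> u /andP[_ ->].
have -> : (\sum_(v <= u < n) (u < v : nat))%N = 0%N.
  by rewrite big_nat_cond big1 // => u /andP[/andP[vu _] _]; rewrite ltnNge vu.
by rewrite sum_nat_const_nat muln1 subn0 addn0.
Qed.

Lemma sum_mem_natr (R : pzSemiRingType) (T : finType) (A : {pred T}) :
  \sum_x ((x \in A)%:R : R) = #|A|%:R.
Proof. by rewrite -sumr_const [RHS]big_mkcond; apply: eq_bigr => x _; case: (x \in A). Qed.

Lemma prod_natr_forall (R : comPzSemiRingType) (T : finType) (b : pred T) :
  \prod_x ((b x)%:R : R) = [forall x, b x]%:R.
Proof.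
case: forallP => [bT|/forallP]; first by rewrite big1 // => x _; rewrite bT.
rewrite negb_forall => /existsP[x /negbTE bx].
by rewrite (bigD1 x) //= bx mul0r.
Qed.

Section Chebyshev.
Variables (R : realFieldType) (T : finType) (w : T -> R).
Hypotheses (w_ge0 : forall x, 0 <= w x) (w_sum1 : \sum_x w x = 1).

Lemma chebyshev_lower_tail (X : T -> R) (mu beta : R) :
  \sum_x w x * X x = mu -> 0 <= mu -> 0 <= beta < 1 ->
  (\sum_(x | X x <= beta * mu) w x) * ((1 - beta) ^+ 2 * mu ^+ 2)
    <= \sum_x w x * X x ^+ 2 - mu ^+ 2.
Proof.
move=> mu_def mu0 /andP[b0 b1]; rewrite big_distrl /=.
apply: le_trans (_ : \sum_(x | X x <= beta * mu) w x * (mu - X x) ^+ 2 <= _).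
  apply: ler_sum => x Xx; apply: ler_wpM2l => //.
  have gap_le : (1 - beta) * mu <= mu - X x by rewrite mulrBl mul1r lerD2l lerN2.
  have gap_ge0 : 0 <= (1 - beta) * mu by apply: mulr_ge0; rewrite // subr_ge0 ltW.
  rewrite -exprMn; nra.
apply: le_trans (_ : \sum_x w x * (mu - X x) ^+ 2 <= _).
  rewrite [X in _ <= X](bigID (fun x => X x <= beta * mu)) /= lerDl.
  by apply: sumr_ge0 => x _; apply: mulr_ge0; [|apply: sqr_ge0].
rewrite (eq_bigr (fun x => w x * X x ^+ 2 - (2 * mu) * (w x * X x) + mu ^+ 2 * w x)).
  rewrite !big_split /= sumrN -!big_distrr /= w_sum1 mu_def.
  by rewrite le_eqVlt; apply/orP; left; apply/eqP; ring.
by move=> x _; ring.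
Qed.

End Chebyshev.

Section Gnp.
Variables (R : realType) (n : nat) (p : R).

Definition edge_wt (x : 'I_n * 'I_n) (b : bool) : R :=
  if (x.1 < x.2)%N then (if b then p else 1 - p) else (~~ b)%:R.

Lemma edge_wt_sum x : edge_wt x true + edge_wt x false = 1.
Proof. by rewrite /edge_wt; case: ifP => _; rewrite ?add0r // addrC subrK. Qed.

Lemma gnp_probE (E : gedges n) : gnp_prob p E = \prod_x edge_wt x (x \in E).
Proof.
rewrite /gnp_prob /is_simple_edges; case: forallP => [simpleE|]; last first.
  move/forallP; rewrite negb_forall => /existsP[x]; rewrite negb_imply => /andP[xE nx].
  by rewrite (bigD1 x) //= /edge_wt xE (negbTE nx) mul0r.
have sub : E \subset ltn_pairs n.
  by apply/subsetP => x xE; rewrite inE; exact: (implyP (simpleE x) xE).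
rewrite (bigID (mem (ltn_pairs n))) /= [X in _ = _ * X]big1 ?mulr1; last first.
  move=> x; rewrite inE => /negbTE nx; rewrite /edge_wt nx.
  by case xE: (x \in E); rewrite // (implyP (simpleE x) xE) in nx.
rewrite (bigID (mem E)) /= (eq_bigr (fun=> p)); last first.
  by move=> x /andP[]; rewrite /edge_wt inE => -> ->.
rewrite [X in _ = _ * X](eq_bigr (fun=> 1 - p)); last first.
  by move=> x /andP[]; rewrite /edge_wt inE => -> /negbTE ->.
rewrite !prodr_const -card_ltn_pairs -(cardsID E (ltn_pairs n)) (setIidPr sub) addKn.
congr (_ ^+ _ * _ ^+ _); apply: eq_card => x; rewrite [RHS]unfold_in /=.
  by apply/idP/andP => [xE|[]//]; rewrite (subsetP sub).
by rewrite inE andbC.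
Qed.

Lemma gnp_E_prod (ok : 'I_n * 'I_n -> bool -> bool) :
  gnp_E p (fun E => \prod_x (ok x (x \in E))%:R)
  = \prod_x \sum_b edge_wt x b * (ok x b)%:R.
Proof.
rewrite bigA_distr_bigA /= /gnp_E.
rewrite (reindex (fun f : {ffun 'I_n * 'I_n -> bool} => [set x | f x])); last first.
  exists (fun E : gedges n => [ffun x => x \in E]) => [f _|E _].
    by apply/ffunP => x; rewrite ffunE inE.
  by apply/setP => x; rewrite inE ffunE.
apply: eq_bigr => f _; rewrite gnp_probE -big_split /=.
by apply: eq_bigr => x _; rewrite inE.
Qed.

Lemma gnp_prob_sum1 : \sum_(E : gedges n) gnp_prob p E = 1.
Proof.
have := gnp_E_prod (fun _ _ => true); rewrite /gnp_E.
rewrite (eq_bigr (gnp_prob p)) => [->|E _]; last by rewrite big1 ?mulr1.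
by apply: big1 => x _; rewrite big_bool /= !mulr1 edge_wt_sum.
Qed.

Hypothesis p01 : 0 <= p <= 1.

Lemma edge_wt_ge0 x b : 0 <= edge_wt x b.
Proof.
by case/andP: p01 => p0 p1; rewrite /edge_wt; case: ifP; case: b; rewrite ?subr_ge0.
Qed.

Lemma gnp_prob_ge0 (E : gedges n) : 0 <= gnp_prob p E.
Proof. by rewrite gnp_probE; apply: prodr_ge0 => x _; apply: edge_wt_ge0. Qed.

End Gnp.

Section Parts.
Variables (n m : nat).
Local Notation part := (@part n m).

Lemma part_ltn (i j : 'I_m) (u v : 'I_n) :
  u \in part i -> v \in part j -> (i < j)%N -> (u < v)%N.
Proof.
rewrite !inE => /andP[_ ui] /andP[jv _] ij.
by apply: leq_trans ui (leq_trans _ jv); rewrite leq_mul2r ij orbT.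
Qed.

Lemma part_unique (i j : 'I_m) (v : 'I_n) : v \in part i -> v \in part j -> i = j.
Proof.
move=> vi vj; case: (ltngtP i j) => [ij|ji|/val_inj //].
  by have := part_ltn vi vj ij; rewrite ltnn.
by have := part_ltn vj vi ji; rewrite ltnn.
Qed.

Lemma card_part (i : 'I_m) : #|part i| = (n %/ m)%N.
Proof.
set q := (n %/ m)%N.
have iq_le : (i * q + q <= n)%N.
  rewrite addnC -mulSn; apply: leq_trans (leq_divM n m).
  by rewrite mulnC leq_mul2l ltn_ord orbT.
have shift_lt (k : 'I_q) : (i * q + k < n)%N.
  by apply: leq_trans iq_le; rewrite ltn_add2l ltn_ord.
pose shift (k : 'I_q) : 'I_n := Ordinal (shift_lt k).
have shift_inj : injective shift by move=> a b /(congr1 val) /= /addnI /val_inj.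
rewrite -[RHS](card_ord q) -cardsT -(card_imset _ shift_inj).
apply: eq_card => v; rewrite inE; apply/andP/imsetP => [[v1 v2]|[k _ ->]].
  have vq : (v - i * q < q)%N by rewrite ltn_subLR // addnC -mulSn.
  by exists (Ordinal vq) => //; apply: val_inj; rewrite /= subnKC.
by rewrite /= leq_addr mulSn addnC ltn_add2r ltn_ord.
Qed.

End Parts.

Section InducedCopies.
Variables (n m : nat) (e : rel 'I_m).
Implicit Types (f g : {ffun 'I_m -> 'I_n}) (E : gedges n) (x : 'I_n * 'I_n).

Definition in_parts f := [forall i, f i \in @part n m i].

Definition induced_copy f E := [forall i, forall j, e i j == gadj E (f i) (f j)].

Definition agreement_set f g := [set i | f i == g i].

Definition agrees f x b :=
  [forall i : 'I_m, forall j : 'I_m, ((i < j)%N && (x == (f i, f j))) ==> (b == e i j)].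

Lemma in_parts_part f (i : 'I_m) : in_parts f -> f i \in @part n m i.
Proof. by move/forallP. Qed.

Lemma in_parts_ltn f (i j : 'I_m) : in_parts f -> (i < j)%N -> (f i < f j)%N.
Proof. by move=> fP; apply: part_ltn; apply: in_parts_part. Qed.

Lemma in_parts_eq f g (i j : 'I_m) : in_parts f -> in_parts g -> f i = g j -> i = j.
Proof.
move=> fP gP fgij; apply: (@part_unique n m _ _ (f i)); first exact: in_parts_part.
by rewrite fgij; apply: in_parts_part.
Qed.

Lemma in_parts_inj f : in_parts f -> injective f.
Proof. by move=> fP i j; apply: in_parts_eq. Qed.

Lemma induced_copyE f E : simple_graph e -> is_simple_edges E -> in_parts f ->
  induced_copy f E = [forall x, agrees f x (x \in E)].
Proof.
case=> irr sym /forallP simpleE fP.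
have E_ltn u v : (u, v) \in E -> (u < v)%N by move/(implyP (simpleE (u, v))).
have E_gtn (u v : 'I_n) : (v < u)%N -> ((u, v) \in E) = false.
  by move=> vu; apply/negP => /E_ltn uv; have := ltn_trans uv vu; rewrite ltnn.
apply/forallP/forallP => [copy x|agr i].
  apply/forallP => i; apply/forallP => j; apply/implyP => /andP[ij /eqP ->].
  move/forallP: (copy i) => /(_ j) /eqP ->.
  by rewrite /gadj (E_gtn _ _ (in_parts_ltn fP ij)) orbF.
apply/forallP => j; rewrite /gadj.
case: (ltngtP i j) => [ij|ji|/val_inj <-].
- have := forallP (forallP (agr (f i, f j)) i) j.
  by rewrite ij eqxx /= => /eqP ->; rewrite (E_gtn _ _ (in_parts_ltn fP ij)) orbF.
- have := forallP (forallP (agr (f j, f i)) j) i.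
  by rewrite ji eqxx /= => /eqP ->; rewrite (E_gtn _ _ (in_parts_ltn fP ji)) sym.
- by rewrite irr orbb; apply/eqP/esym/negP => /E_ltn; rewrite ltnn.
Qed.

(* A copy is determined by its vertex set S: f i is the unique vertex of S in the i-th part. *)
Lemma X_H_sum (R : pzSemiRingType) E :
  (X_H e E)%:R = \sum_f (in_parts f)%:R * (induced_copy f E)%:R :> R.
Proof.
rewrite (eq_bigr (fun f => (f \in [set f | in_parts f && induced_copy f E])%:R)); last first.
  by move=> f _; rewrite inE -natrM mulnb.
rewrite sum_mem_natr; congr (_ %:R).
rewrite /X_H -(@card_in_imset _ _ (fun f => f @: [set: 'I_m])
  [set f | in_parts f && induced_copy f E]); last first.
  move=> f g; rewrite !inE => /andP[fP _] /andP[gP _] fg; apply/ffunP => i.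
  have /imsetP[k _ fik] : f i \in g @: [set: 'I_m] by rewrite -fg imset_f.
  by rewrite fik (in_parts_eq fP gP fik).
apply: eq_card => S; rewrite inE; apply/existsP/imsetP.
  by case=> f /and4P[fP /eqP -> _ copy]; exists f; rewrite // inE /in_parts fP.
case=> f; rewrite inE => /andP[fP copy] ->; exists f.
by apply/and4P; split => //; apply/injectiveP; apply: in_parts_inj.
Qed.

End InducedCopies.

Lemma sum_mem_pairs_diag (R : comNzRingType) (T : finType) (P : {set T}) (t : R) :
  \sum_u \sum_v ((u \in P)%:R * (v \in P)%:R * (if u == v then t else 1))
  = (#|P| * #|P|)%:R + #|P|%:R * (t - 1).
Proof.
have row u : \sum_v ((u \in P)%:R * (v \in P)%:R * (if u == v then t else 1))
    = (u \in P)%:R * #|P|%:R + (u \in P)%:R * (t - 1).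
  rewrite (eq_bigr (fun v => (u \in P)%:R * (v \in P)%:R +
             (u \in P)%:R * (v \in P)%:R * ((u == v)%:R * (t - 1)))); last first.
    by move=> v _; case: eqP => _; rewrite ?mul1r ?mul0r ?addr0 //; ring.
  rewrite big_split /= -big_distrr /= sum_mem_natr; congr (_ + _).
  rewrite (bigD1 u) //= big1 ?addr0 => [|v /negbTE]; last first.
    by rewrite eq_sym => ->; rewrite mul0r mulr0.
  by case: (u \in P); rewrite /= ?eqxx ?mul1r ?mul0r.
by rewrite (eq_bigr _ (fun u _ => row u)) big_split /= -!big_distrl /= sum_mem_natr natrM.
Qed.

Section PartCounting.
Variables (R : comNzRingType) (n m : nat).
Local Notation q := (n %/ m)%N.

Lemma sum_in_parts : \sum_(f : {ffun 'I_m -> 'I_n}) (in_parts f)%:R = q%:R ^+ m :> R.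
Proof.
rewrite (eq_bigr (fun f : {ffun 'I_m -> 'I_n} => \prod_i ((f i \in @part n m i)%:R : R)));
  last by move=> f _; rewrite prod_natr_forall.
rewrite -(bigA_distr_bigA (fun i u => ((u \in @part n m i)%:R : R))) /=.
rewrite (eq_bigr (fun _ => q%:R)) ?prodr_const ?card_ord // => i _.
by rewrite sum_mem_natr card_part.
Qed.

Lemma sum_in_parts2_exp_agree (t : R) :
  \sum_(f : {ffun 'I_m -> 'I_n}) \sum_(g : {ffun 'I_m -> 'I_n})
     (in_parts f)%:R * (in_parts g)%:R * t ^+ #|agreement_set f g|
  = ((q * q)%:R + q%:R * (t - 1)) ^+ m.
Proof.
pose F (i : 'I_m) (u v : 'I_n) : R :=
  (u \in @part n m i)%:R * (v \in @part n m i)%:R * (if u == v then t else 1).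
have split_i f g : (in_parts f)%:R * (in_parts g)%:R * t ^+ #|agreement_set f g|
    = \prod_i F i (f i) (g i).
  rewrite /F !big_split /= -!prod_natr_forall -big_mkcond prodr_const /=.
  by congr (_ * _ ^+ _); apply: eq_card => i; rewrite inE.
rewrite (eq_bigr (fun f : {ffun 'I_m -> 'I_n} => \prod_i \sum_v F i (f i) v)); last first.
  by move=> f _; rewrite bigA_distr_bigA /=; apply: eq_bigr => g _; rewrite split_i.
rewrite -(bigA_distr_bigA (fun i u => \sum_v F i u v)) /=.
rewrite (eq_bigr (fun _ => (q * q)%:R + q%:R * (t - 1))) ?prodr_const ?card_ord // => i _.
by rewrite /F sum_mem_pairs_diag card_part.
Qed.

End PartCounting.

Section EdgePairs.
Variables (m : nat) (e : rel 'I_m).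

Definition edge_pairs := [set ij in ltn_pairs m | e ij.1 ij.2].

Lemma n_edges_in_ord (S : {set 'I_m}) :
  n_edges_in e S = #|[set ij in edge_pairs | (ij.1 \in S) && (ij.2 \in S)]|.
Proof.
by apply: eq_card => ij; rewrite !inE !enum_rank_ord /= [RHS]andbC -andbA.
Qed.

End EdgePairs.

Lemma balanced_exp_edges_le (R : realType) (T : finType) (e : rel T) (alpha x : R)
    (S : {set T}) :
  balanced e alpha -> 1 <= x -> x ^+ n_edges_in e S <= (x `^ (alpha / 2)) ^+ #|S|.
Proof.
case=> _ bal x1; have x0 : 0 <= x by apply: le_trans x1.
have [->|S0] := eqVneq S set0.
  have -> : n_edges_in e set0 = 0%N by apply: eq_card0 => ij; rewrite !inE.
  by rewrite cards0 !expr0.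
have := bal S S0; rewrite /avg_deg_in ler_pdivrMr ?ltr0n ?card_gt0 // natrM => deg_le.
rewrite -powR_mulrn // -powR_mulrn ?powR_ge0 // -powRrM.
by apply: ler_powR => //; lra.
Qed.

Lemma avg_deg_exp_edges (R : realType) (T : finType) (e : rel T) (alpha x : R) :
  has_avg_deg e alpha -> (0 < #|T|)%N -> 0 <= x ->
  x ^+ n_edges_in e [set: T] = (x `^ (alpha / 2)) ^+ #|T|.
Proof.
rewrite /has_avg_deg /avg_deg_in cardsT => <- T_gt0 x_ge0.
rewrite -powR_mulrn // -powR_mulrn ?powR_ge0 // -powRrM; congr (_ `^ _).
by rewrite natrM; field; rewrite pnatr_eq0 -lt0n.
Qed.

Section FirstMoment.
Variables (R : realType) (n m : nat) (e : rel 'I_m) (p : R).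
Hypotheses (se : simple_graph e) (p_gt0 : 0 < p) (p_lt1 : p < 1).
Implicit Types (f g : {ffun 'I_m -> 'I_n}) (x : 'I_n * 'I_n).

Definition fpair f (ij : 'I_m * 'I_m) := (f ij.1, f ij.2).
Definition pair_image f := fpair f @: ltn_pairs m.
Definition edge_image f := fpair f @: edge_pairs e.

Definition pattern_prob := \prod_(ij in ltn_pairs m) (if e ij.1 ij.2 then p else 1 - p).

Definition agree_prob f x := \sum_b edge_wt p x b * (agrees e f x b)%:R.

Lemma fpair_inj f : in_parts f -> injective (fpair f).
Proof. by move=> fP [i j] [k l] [] /(in_parts_inj fP) -> /(in_parts_inj fP) ->. Qed.

Lemma agrees_image f (i j : 'I_m) b : in_parts f -> (i < j)%N ->
  agrees e f (f i, f j) b = (b == e i j).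
Proof.
move=> fP ij; apply/forallP/idP => [/(_ i)/forallP/(_ j)|/eqP -> k].
  by rewrite ij eqxx.
apply/forallP => l; apply/implyP => /andP[_ /eqP[]].
by move=> /(in_parts_inj fP) <- /(in_parts_inj fP) <-.
Qed.

Lemma agrees_notin f x b : x \notin pair_image f -> agrees e f x b.
Proof.
move=> xf; apply/forallP => i; apply/forallP => j; apply/implyP => /andP[ij /eqP xij].
by case/imsetP: xf; exists (i, j); rewrite ?inE.
Qed.

Lemma agree_prob_notin f x : x \notin pair_image f -> agree_prob f x = 1.
Proof. by move=> xf; rewrite /agree_prob big_bool /= !agrees_notin // !mulr1 edge_wt_sum. Qed.

Lemma agree_prob_image f (i j : 'I_m) : in_parts f -> (i < j)%N ->
  agree_prob f (f i, f j) = if e i j then p else 1 - p.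
Proof.
move=> fP ij; rewrite /agree_prob big_bool /= !agrees_image // /edge_wt /=.
by rewrite (in_parts_ltn fP ij); case: (e i j); rewrite /= ?mulr1 ?mulr0 ?addr0 ?add0r.
Qed.

Lemma prod_agree_prob f : in_parts f -> \prod_x agree_prob f x = pattern_prob.
Proof.
move=> fP; rewrite (bigID (mem (pair_image f))) /= [X in _ * X]big1 ?mulr1; last first.
  by move=> x; apply: agree_prob_notin.
rewrite big_imset /=; last by move=> ij kl _ _; apply: fpair_inj.
by apply: eq_bigr => [[i j]]; rewrite inE /=; apply: agree_prob_image.
Qed.

Lemma gnp_E_induced_copy f : in_parts f ->
  gnp_E p (fun E => (induced_copy e f E)%:R) = pattern_prob.
Proof.
move=> fP; rewrite -(prod_agree_prob fP) -gnp_E_prod.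
apply: eq_bigr => E _; rewrite prod_natr_forall.
case sE: (is_simple_edges E); first by rewrite (induced_copyE se sE fP).
by rewrite /gnp_prob sE !mul0r.
Qed.

Lemma gnp_E_X_H :
  gnp_E p (fun E : gedges n => (X_H e E)%:R) = (n %/ m)%:R ^+ m * pattern_prob.
Proof.
rewrite /gnp_E (eq_bigr (fun E => \sum_(f : {ffun 'I_m -> 'I_n})
    gnp_prob p E * ((in_parts f)%:R * (induced_copy e f E)%:R))); last first.
  by move=> E _; rewrite X_H_sum big_distrr.
rewrite exchange_big -sum_in_parts big_distrl /=; apply: eq_bigr => f _.
case fP: (in_parts f); last by rewrite big1 ?mul0r // => E _; rewrite mul0r mulr0.
by rewrite mul1r -(gnp_E_induced_copy fP); apply: eq_bigr => E _; rewrite mul1r.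
Qed.

Lemma pattern_prob_gt0 : 0 < pattern_prob.
Proof. by apply: prodr_gt0 => ij _; case: ifP; rewrite ?subr_gt0. Qed.

Lemma pattern_prob_ge : p ^+ n_edges_in e [set: 'I_m] * (1 - p) ^+ (m * m) <= pattern_prob.
Proof.
have q_gt0 : 0 < 1 - p by rewrite subr_gt0.
have q_le1 : 1 - p <= 1 by rewrite lerBlDr lerDl ltW.
apply: le_trans (_ : p ^+ n_edges_in e [set: 'I_m] * (1 - p) ^+ #|ltn_pairs m| <= _).
  apply: ler_wpM2l; first by rewrite exprn_ge0 ?ltW.
  apply: ler_wiXn2l; rewrite ?ltW ?ltrBlDr ?ltrDl //.
  by apply: leq_trans (max_card _) _; rewrite card_prod card_ord.
apply: le_trans (_ : \prod_(ij in ltn_pairs m) ((if e ij.1 ij.2 then p else 1) * (1 - p)) <= _).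
  rewrite big_split /= prodr_const -big_mkcondr /= prodr_const n_edges_in_ord.
  rewrite (eq_card (B := edge_pairs e)) => [|ij]; last by rewrite !inE !andbT.
  by rewrite [X in _ <= p ^+ X * _](eq_card (B := edge_pairs e)) // => ij; rewrite inE.
apply: ler_prod => ij _; case: ifP => _; rewrite ?mul1r ?lexx ?andbT.
- by rewrite mulr_ge0 ?(ltW p_gt0) ?(ltW q_gt0) //= ler_piMr ?(ltW p_gt0).
- exact: ltW.
Qed.

End FirstMoment.

Section SecondMoment.
Variables (R : realType) (n m : nat) (e : rel 'I_m) (p : R).
Hypotheses (se : simple_graph e) (p_gt0 : 0 < p) (p_lt1 : p < 1).
Implicit Types (f g : {ffun 'I_m -> 'I_n}) (x : 'I_n * 'I_n).

Definition agree2_prob f g x :=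
  \sum_b edge_wt p x b * (agrees e f x b)%:R * (agrees e g x b)%:R.

Lemma gnp_E_induced_copy2 f g : in_parts f -> in_parts g ->
  gnp_E p (fun E => (induced_copy e f E)%:R * (induced_copy e g E)%:R)
  = \prod_x agree2_prob f g x.
Proof.
move=> fP gP; rewrite /agree2_prob.
under eq_bigr do under eq_bigr do rewrite -mulrA -natrM mulnb.
rewrite -gnp_E_prod; apply: eq_bigr => E _.
case sE: (is_simple_edges E); last by rewrite /gnp_prob sE !mul0r.
rewrite (induced_copyE se sE fP) (induced_copyE se sE gP) -!prod_natr_forall -big_split /=.
by congr (_ * _); apply: eq_bigr => x _; rewrite -natrM mulnb.
Qed.

Lemma mem_edge_image f (i j : 'I_m) : in_parts f -> (i < j)%N ->
  ((f i, f j) \in edge_image e f) = e i j.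
Proof.
move=> fP ij; apply/imsetP/idP => [[[k l]]|eij]; last by exists (i, j); rewrite // !inE ij.
by rewrite !inE /= => /andP[_ ekl] [] /(in_parts_inj fP) -> /(in_parts_inj fP) ->.
Qed.

Lemma edge_image_sub f : edge_image e f \subset pair_image f.
Proof. by apply: imsetS; apply/subsetP => ij; rewrite inE => /andP[]. Qed.

Definition overlap_factor f g x :=
  (if x \in edge_image e f :&: edge_image e g then p^-1 else 1) *
  (if x \in pair_image f then (1 - p)^-1 else 1).

(* Only pairs in the image of both f and g are correlated; there the joint probability
   is p, 1 - p or 0 instead of a product of two such factors. *)
Lemma agree2_prob_le f g x : in_parts f -> in_parts g ->
  agree2_prob f g x <= agree_prob e p f x * agree_prob e p g x * overlap_factor f g x.
Proof.
move=> fP gP; have p01 : 0 <= p <= 1 by rewrite !ltW.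
rewrite /overlap_factor inE.
have [xf|xf] := boolP (x \in pair_image f); last first.
  rewrite (agree_prob_notin e p xf) (negbTE (contra (subsetP (edge_image_sub f) x) xf)).
  suff -> : agree2_prob f g x = agree_prob e p g x by rewrite !mul1r mulr1.
  by apply: eq_bigr => b _; rewrite (agrees_notin _ _ xf) mulr1.
have [xg|xg] := boolP (x \in pair_image g); last first.
  rewrite (agree_prob_notin e p xg) (negbTE (contra (subsetP (edge_image_sub g) x) xg)).
  suff -> : agree2_prob f g x = agree_prob e p f x.
    rewrite andbF mul1r mulr1; apply: ler_peMr.
      by apply: sumr_ge0 => b _; rewrite mulr_ge0 ?ler0n ?edge_wt_ge0.
    by rewrite invf_ge1 ?subr_gt0 // lerBlDr lerDl ltW.
  by apply: eq_bigr => b _; rewrite (agrees_notin _ _ xg) mulr1.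
case/imsetP: xf => [[i j]]; rewrite inE /= => ij xE.
case/imsetP: xg => [[k l]]; rewrite inE xE /fpair /= => kl [fgi fgj].
rewrite (mem_edge_image fP ij) fgi fgj (mem_edge_image gP kl) -fgi -fgj.
rewrite !agree_prob_image // fgi fgj agree_prob_image // -fgi -fgj.
rewrite /agree2_prob big_bool /= !agrees_image // fgi fgj !agrees_image // -fgi -fgj.
rewrite /edge_wt /= (in_parts_ltn fP ij).
case: (e i j); case: (e k l); rewrite /= ?mulr1 ?mulr0 ?addr0 ?add0r ?mul0r ?mul1r.
- rewrite mulrA -(mulrA p) mulfV ?gt_eqF // mulr1 ler_pdivlMr ?subr_gt0 //; nra.
- by rewrite divr_ge0 ?mulr_ge0 ?subr_ge0 ?ltW.
- by rewrite divr_ge0 ?mulr_ge0 ?subr_ge0 ?ltW.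
- by rewrite mulfK ?gt_eqF ?subr_gt0.
Qed.

Lemma card_common_edges f g : in_parts f -> in_parts g ->
  (#|edge_image e f :&: edge_image e g| <= n_edges_in e (agreement_set f g))%N.
Proof.
move=> fP gP; rewrite n_edges_in_ord.
apply: leq_trans (leq_imset_card (fpair f) _); apply: subset_leq_card.
apply/subsetP => x; rewrite inE => /andP[/imsetP[[i j] ije xE] /imsetP[[k l] kle]].
rewrite xE /fpair /= => -[fgi fgj]; apply/imsetP; exists (i, j) => //.
move: ije kle; rewrite !inE /= => /andP[ij eij] /andP[kl _].
by rewrite ij eij fgi fgj -(in_parts_eq fP gP fgi) -(in_parts_eq fP gP fgj) !eqxx.
Qed.

Lemma gnp_E_induced_copy2_le f g : in_parts f -> in_parts g ->
  gnp_E p (fun E => (induced_copy e f E)%:R * (induced_copy e g E)%:R)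
  <= pattern_prob e p ^+ 2 *
     (p^-1 ^+ n_edges_in e (agreement_set f g) * (1 - p)^-1 ^+ (m * m)).
Proof.
move=> fP gP; have p01 : 0 <= p <= 1 by rewrite !ltW.
have pV_ge1 : 1 <= p^-1 by rewrite invf_ge1 // ltW.
have qV_ge1 : 1 <= (1 - p)^-1 by rewrite invf_ge1 ?subr_gt0 // lerBlDr lerDl ltW.
rewrite gnp_E_induced_copy2 //.
apply: le_trans (_ : \prod_x (agree_prob e p f x * agree_prob e p g x * overlap_factor f g x) <= _).
  apply: ler_prod => x _; rewrite agree2_prob_le // andbT.
  by apply: sumr_ge0 => b _; rewrite !mulr_ge0 ?ler0n ?edge_wt_ge0.
rewrite !big_split /= !prod_agree_prob // -expr2 -!big_mkcond /= !prodr_const.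
apply: ler_wpM2l; first by rewrite exprn_ge0 // ltW // pattern_prob_gt0.
apply: ler_pM; rewrite ?exprn_ge0 ?(le_trans _ pV_ge1) ?(le_trans _ qV_ge1) //.
  by apply: ler_weXn2l => //; apply: card_common_edges.
apply: ler_weXn2l => //; apply: leq_trans (leq_imset_card _ _) _.
by apply: leq_trans (max_card _) _; rewrite card_prod card_ord.
Qed.

Variable alpha : R.
Hypothesis bal : balanced e alpha.
Local Notation q := (n %/ m)%N.
Local Notation X := (fun E : gedges n => (X_H e E)%:R).

Lemma gnp_E_X_H2_le :
  gnp_E p (fun E => X E ^+ 2) <= pattern_prob e p ^+ 2 * (1 - p)^-1 ^+ (m * m) *
    ((q * q)%:R + q%:R * (p^-1 `^ (alpha / 2) - 1)) ^+ m.
Proof.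
have pV_ge1 : 1 <= p^-1 by rewrite invf_ge1 // ltW.
rewrite /gnp_E -sum_in_parts2_exp_agree big_distrr /=.
have expand E : gnp_prob p E * X E ^+ 2 = \sum_f \sum_g
    (in_parts f)%:R * (in_parts g)%:R *
    (gnp_prob p E * ((induced_copy e f E)%:R * (induced_copy e g E)%:R)).
  rewrite expr2 X_H_sum big_distrl big_distrr /=; apply: eq_bigr => f _.
  by rewrite !big_distrr /=; apply: eq_bigr => g _; ring.
rewrite (eq_bigr _ (fun E _ => expand E)) exchange_big /=; apply: ler_sum => f _.
rewrite big_distrr exchange_big /=; apply: ler_sum => g _.
rewrite -big_distrr /= mulrCA.
case fP: (in_parts f); case gP: (in_parts g); rewrite /= ?mul1r ?mul0r //.
apply: le_trans (gnp_E_induced_copy2_le fP gP) _.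
rewrite -[X in _ <= X]mulrA; apply: ler_wpM2l; first by rewrite exprn_ge0 ?ltW ?pattern_prob_gt0.
rewrite mulrC; apply: ler_wpM2l; first by rewrite exprn_ge0 // invr_ge0 subr_ge0 ltW.
exact: balanced_exp_edges_le bal pV_ge1.
Qed.

Lemma X_H_lower_tail_le (beta : R) : 0 <= beta < 1 -> (0 < q)%N ->
  gnp_Pr p (fun E => X E <= beta * gnp_E p X)
  <= ((1 - p)^-1 ^+ (m * m) * (1 + (p^-1 `^ (alpha / 2) - 1) / q%:R) ^+ m - 1)
     / (1 - beta) ^+ 2.
Proof.
move=> beta01 q_gt0; have [_ beta_lt1] := andP beta01.
have p01 : 0 <= p <= 1 by rewrite !ltW.
set mu := gnp_E p X; set c := _ ^+ (m * m); set t := p^-1 `^ _.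
have Q_gt0 : 0 < q%:R :> R by rewrite ltr0n.
have mu_gt0 : 0 < mu by rewrite /mu (gnp_E_X_H n p se) mulr_gt0 ?exprn_gt0 ?pattern_prob_gt0.
have := chebyshev_lower_tail (gnp_prob_ge0 p01) (@gnp_prob_sum1 _ n p) (erefl mu)
  (ltW mu_gt0) beta01.
have var_le : gnp_E p (fun E => X E ^+ 2) - mu ^+ 2
    <= mu ^+ 2 * (c * (1 + (t - 1) / q%:R) ^+ m - 1).
  apply: le_trans (lerB gnp_E_X_H2_le (lexx _)) _; rewrite -/c.
  have -> : (q * q)%:R + q%:R * (t - 1) = q%:R ^+ 2 * (1 + (t - 1) / q%:R) :> R.
    by rewrite natrM; field; rewrite gt_eqF.
  rewrite exprMn -exprM mulnC exprM /mu (gnp_E_X_H n p se).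
  by rewrite le_eqVlt; apply/orP; left; apply/eqP; ring.
move/le_trans/(_ var_le); rewrite mulrA [X in X <= _]mulrC ler_pM2l ?exprn_gt0 //.
by move=> tail_le; rewrite ler_pdivlMr ?exprn_gt0 ?subr_gt0.
Qed.

End SecondMoment.

Section Asymptotics.
Variable R : realType.

Lemma powR_nat_ge (a K : R) : 0 < a ->
  exists N : nat, forall n : nat, (N <= n)%N -> K <= n%:R `^ a.
Proof.
move=> a_gt0; set K1 := Num.max K 1.
have K1_ge1 : 1 <= K1 by rewrite le_max lexx orbT.
set x := K1 `^ a^-1.
exists (Num.truncn x).+1 => n n_ge.
have x_le : x <= n%:R by apply/ltW/(lt_le_trans (truncnS_gt x)); rewrite ler_nat.
apply: le_trans (_ : x `^ a <= _).
  have K1_ge0 : 0 <= K1 by apply: le_trans K1_ge1.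
  by rewrite /x -powRrM mulVf ?gt_eqF // powRr1 // le_max lexx.
have x_ge0 : 0 <= x by apply: powR_ge0.
by apply: ge0_ler_powR; rewrite ?nnegrE ?(ltW a_gt0) ?(le_trans x_ge0 x_le).
Qed.

Lemma powR_natN_le (a eta : R) : 0 < a -> 0 < eta ->
  exists N : nat, forall n : nat, (N <= n)%N -> n%:R `^ (- a) <= eta.
Proof.
move=> a_gt0 eta_gt0; have [N HN] := powR_nat_ge (Num.max eta^-1 1) a_gt0.
exists N.+1 => n n_ge; have n_gt0 : 0 < n%:R :> R by rewrite ltr0n (leq_trans _ n_ge).
have := HN n (ltnW n_ge); rewrite ge_max => /andP[etaV_le _].
by rewrite powRN invf_ple ?posrE ?invr_gt0 ?powR_gt0.
Qed.

Lemma bernoulli_ineq (x : R) (k : nat) : 0 <= x <= 1 -> 1 - k%:R * x <= (1 - x) ^+ k.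
Proof.
case/andP=> x_ge0 x_le1; elim: k => [|k IHk]; first by rewrite mul0r subr0 expr0.
rewrite exprSr -natr1; apply: le_trans (ler_wpM2r _ IHk); rewrite ?subr_ge0 //.
by have := ler0n R k; nra.
Qed.

Lemma expR_le_invr1B (y : R) : y < 1 -> expR y <= (1 - y)^-1.
Proof.
move=> y_lt1; have := expR_ge1Dx (- y); rewrite expRN => h.
by rewrite -[expR y]invrK lef_pV2 ?posrE ?invr_gt0 ?expR_gt0 ?subr_gt0.
Qed.

Lemma invr1B_le_expR (x : R) : 0 <= x <= 1 / 2 -> (1 - x)^-1 <= expR (2 * x).
Proof.
case/andP=> x_ge0 x_le; apply: le_trans (expR_ge1Dx _).
by rewrite -[(1 - x)^-1]mul1r ler_pdivrMr; nra.
Qed.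

Lemma second_moment_factor_le (x t Q eps : R) (m : nat) :
  0 <= x <= 1 / 2 -> 1 <= t -> 0 < Q -> 0 <= eps <= 1 / 4 ->
  (m * m)%:R * x <= eps / 2 -> t / Q * m%:R <= eps ->
  (1 - x)^-1 ^+ (m * m) * (1 + (t - 1) / Q) ^+ m - 1 <= 4 * eps.
Proof.
move=> x01 t_ge1 Q_gt0 /andP[eps_ge0 eps_le] mmx_le tmQ_le.
have /andP[x_ge0 x_le] := x01.
have c_le : (1 - x)^-1 ^+ (m * m) <= expR (2 * x * (m * m)%:R).
  rewrite expRM_natr; apply: lerXn2r; rewrite ?nnegrE ?expR_ge0 ?invr1B_le_expR //.
  by rewrite invr_ge0; lra.
have base_ge0 : 0 <= 1 + (t - 1) / Q by rewrite addr_ge0 // divr_ge0 ?subr_ge0 // ltW.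
have b_le : (1 + (t - 1) / Q) ^+ m <= expR (t / Q * m%:R).
  rewrite expRM_natr; apply: lerXn2r; rewrite ?nnegrE ?expR_ge0 //.
  apply: le_trans (expR_ge1Dx _); rewrite lerD2l ler_wpM2r ?invr_ge0 ?ltW //; lra.
set y := 2 * x * (m * m)%:R + t / Q * m%:R.
have y_le : y <= 2 * eps by rewrite /y; lra.
apply: le_trans (_ : expR y - 1 <= _).
  rewrite lerD2r /y expRD; apply: ler_pM; rewrite ?exprn_ge0 //.
  by rewrite invr_ge0; lra.
apply: le_trans (lerD (expR_le_invr1B (_ : y < 1)) (lexx _)) _; first lra.
rewrite lerBlDr -[(1 - y)^-1]mul1r ler_pdivrMr; [nra | lra].
Qed.

End Asymptotics.

Section Regime.
Variables (R : realType) (delta alpha rho : R) (n m : nat) (e : rel 'I_m).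
Hypotheses (n_gt0 : (0 < n)%N) (m_eq : m%:R = n%:R `^ rho) (m_dvd_n : (m %| n)%N).
Hypotheses (rho_gt0 : 0 < rho) (alpha_ge0 : 0 <= alpha).
Hypotheses (se : simple_graph e) (bal : balanced e alpha).
Local Notation p := (n%:R `^ (delta - 1)).
Local Notation q := (n %/ m)%N.

Let n_gt0R : 0 < n%:R :> R. Proof. by rewrite ltr0n. Qed.

Let powR_natD a b : n%:R `^ a * n%:R `^ b = n%:R `^ (a + b) :> R.
Proof. by rewrite powRD // (gt_eqF n_gt0R) implybT. Qed.

Lemma regime_m_gt0 : (0 < m)%N.
Proof.
suff : 1 <= m%:R :> R by rewrite ler1n.
by rewrite m_eq -[X in X <= _](powRr0 n%:R); apply: ler_powR; rewrite ?ler1n // ltW.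
Qed.

Lemma regime_q_gt0 : (0 < q)%N.
Proof. by rewrite divn_gt0 ?regime_m_gt0 // dvdn_leq. Qed.

Lemma regime_q_powR : q%:R = n%:R `^ (1 - rho) :> R.
Proof.
rewrite natr_div ?unitfE ?pnatr_eq0 -?lt0n ?regime_m_gt0 // m_eq.
by rewrite -{1}(powRr1 (ltW n_gt0R)) -powRN powR_natD.
Qed.

Lemma regime_mmp_powR : (m * m)%:R * p = n%:R `^ (- (1 - delta - 2 * rho)).
Proof. by rewrite natrM m_eq !powR_natD; congr (_ `^ _); ring. Qed.

Lemma regime_tmq_powR :
  p^-1 `^ (alpha / 2) / q%:R * m%:R = n%:R `^ (- (1 - 2 * rho - alpha * (1 - delta) / 2)).
Proof.
rewrite regime_q_powR m_eq -!powRN -powRrM !powR_natD; congr (_ `^ _); ring.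
Qed.

Lemma regime_qp_powR : q%:R * p `^ (alpha / 2) = n%:R `^ (1 - rho - alpha * (1 - delta) / 2).
Proof. by rewrite regime_q_powR -powRrM powR_natD; congr (_ `^ _); ring. Qed.

Local Notation X := (fun E : gedges n => (X_H e E)%:R).

Lemma regime_p_le (c : R) : n%:R `^ (- (1 - delta - 2 * rho)) <= c -> 0 < p <= c.
Proof.
rewrite -regime_mmp_powR => mmp_le.
have p_gt0 : 0 < p by rewrite powR_gt0 // ltr0n.
rewrite p_gt0 /=; apply: le_trans mmp_le; apply: ler_peMl; first exact: ltW.
by rewrite ler1n muln_gt0 regime_m_gt0.
Qed.

Lemma X_H_mean_ge :
  n%:R `^ (- (1 - delta - 2 * rho)) <= 1 / 2 -> 0 <= 1 - rho - alpha * (1 - delta) / 2 ->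
  n%:R `^ (1 - rho - alpha * (1 - delta) / 2) / 2 <= gnp_E p X.
Proof.
move=> mmp_le expo_ge0; have /andP[p_gt0 p_le] := regime_p_le mmp_le.
have p_lt1 : p < 1 by lra.
set G := n%:R `^ _.
have G_ge1 : 1 <= G.
  by rewrite /G -[X in X <= _](powRr0 n%:R); apply: ler_powR; rewrite ?ler1n.
have qmm_ge : 1 / 2 <= (1 - p) ^+ (m * m).
  apply: le_trans (bernoulli_ineq _ _); last by rewrite !ltW.
  by rewrite regime_mmp_powR; lra.
rewrite (gnp_E_X_H n p se).
apply: le_trans _ (ler_wpM2l (exprn_ge0 _ (ler0n _ _)) (pattern_prob_ge e p_gt0 p_lt1)).
rewrite (avg_deg_exp_edges bal.1) ?card_ord ?regime_m_gt0 ?(ltW p_gt0) // mulrA -exprMn.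
rewrite regime_qp_powR -/G.
have GGm : G <= G ^+ m by rewrite ler_eXnr ?regime_m_gt0.
nra.
Qed.

Lemma X_H_lower_tail_small (eps beta : R) :
  n%:R `^ (- (1 - delta - 2 * rho)) <= eps / 2 ->
  n%:R `^ (- (1 - 2 * rho - alpha * (1 - delta) / 2)) <= eps ->
  0 <= eps <= 1 / 4 -> 0 <= beta < 1 ->
  gnp_Pr p (fun E => X E <= beta * gnp_E p X) <= 4 * eps / (1 - beta) ^+ 2.
Proof.
move=> mmp_le tmq_le eps01 beta01; have /andP[p_gt0 p_le] := regime_p_le mmp_le.
have /andP[_ beta_lt1] := beta01; have p_lt1 : p < 1 by lra.
apply: le_trans (X_H_lower_tail_le se p_gt0 p_lt1 bal beta01 regime_q_gt0) _.
apply: ler_wpM2r; first by rewrite invr_ge0 exprn_ge0 // subr_ge0 ltW.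
apply: second_moment_factor_le => //.
- by rewrite (ltW p_gt0); lra.
- rewrite -[X in X <= _](powRr0 p^-1); apply: ler_powR; last by rewrite divr_ge0.
  by rewrite invf_ge1 //; lra.
- by rewrite ltr0n regime_q_gt0.
- by rewrite regime_mmp_powR.
- by rewrite regime_tmq_powR.
Qed.

End Regime.

Unset Implicit Arguments. Set Strict Implicit.

Theorem corollaryC1 (R : realType) (delta eps alpha rho : R) :
  0 < delta < 1 ->
  0 < eps < 1 / 7 ->
  2 < alpha -> alpha < Num.min (2 / (1 - delta)) 3 ->
  0 < rho -> rho < Num.min ((1 - delta) / 2) ((2 - alpha * (1 - delta)) / 4) ->
  (* E[X_H(G)] -> +oo as n -> oo (uniformly over admissible H) *)
  (forall M : R, exists N : nat, forall n : nat, (N <= n)%N ->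
     forall m : nat, m%:R = n%:R `^ rho -> (m %| n)%N ->
     forall e : rel 'I_m, simple_graph e -> balanced e alpha ->
     M <= gnp_E (n%:R `^ (delta - 1)) (fun E => (@X_H n m e E)%:R))
  /\
  (* for all sufficiently large n, the lower-tail bound *)
  (exists N : nat, forall n : nat, (N <= n)%N ->
     forall m : nat, m%:R = n%:R `^ rho -> (m %| n)%N ->
     forall e : rel 'I_m, simple_graph e -> balanced e alpha ->
     forall beta : R, 0 <= beta < 1 ->
     let p := n%:R `^ (delta - 1) in
     gnp_Pr p (fun E => (@X_H n m e E)%:R <= beta * gnp_E p (fun E => (@X_H n m e E)%:R))
       <= 4 * eps / (1 - beta) ^+ 2).
Proof.
move=> /andP[_ delta_lt1] /andP[eps_gt0 eps_lt] alpha_gt2 _ rho_gt0.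
rewrite lt_min => /andP[rho_lt1 rho_lt2].
have alpha_ge0 : 0 <= alpha by lra.
have a1 : 0 < 1 - delta - 2 * rho by lra.
have a2 : 0 < 1 - 2 * rho - alpha * (1 - delta) / 2 by lra.
have a3 : 0 < 1 - rho - alpha * (1 - delta) / 2 by lra.
have eps2_gt0 : 0 < eps / 2 by lra.
have [N1 N1P] := powR_natN_le a1 eps2_gt0.
split=> [M|].
  have [N2 N2P] := powR_nat_ge (2 * M) a3.
  exists (maxn 1 (maxn N1 N2)) => n; rewrite !geq_max => /and3P[n_gt0 /N1P n1 /N2P n2].
  move=> m m_eq m_dvd e se bal.
  by apply: le_trans _ (X_H_mean_ge n_gt0 m_eq m_dvd rho_gt0 se bal _ (ltW a3)); lra.
have [N3 N3P] := powR_natN_le a2 eps_gt0.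
exists (maxn 1 (maxn N1 N3)) => n; rewrite !geq_max => /and3P[n_gt0 /N1P n1 /N3P n3].
move=> m m_eq m_dvd e se bal beta beta01.
apply: (X_H_lower_tail_small n_gt0 m_eq m_dvd rho_gt0 alpha_ge0 se bal) => //; lra.
Qed.
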